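(* Let $c>0$, $f_s>0$, let $M,N,K\geq 1$ be integers, set $T_{\max}=(N-1)/f_s$, and let $\bm{r}^{\mathrm{mic}}_1,\dots,\bm{r}^{\mathrm{mic}}_M\in\mathbb{R}^3$ be microphone positions with $E_M=\{\bm{r}^{\mathrm{mic}}_m: 1\le m\le M\}$. Let $\kappa:\mathbb{R}\to\mathbb{R}$ be continuous with $\kappa(0)>0$ and $\lim_{|t|\to+\infty}\kappa(t)=0$. Let $\bm{x}=(x_{m,n})_{1\le m\le M,\,0\le n\le N-1}\in\mathbb{R}^{MN}$, and assume that $\Gamma^K$ is amplitude lower-bounded with constant $C>0$. Define $$\phi=\inf_{t>0}\sum_{n=0}^{N-1}\frac{\kappa(n/f_s)\,\kappa(n/f_s-t)}{4\pi c t},\qquad \mu_m=\sum_{n=0}^{N-1}x_{m,n}\kappa(n/f_s)\quad(1\le m\le M).$$ Then the problem $$\inf_{(\bm{a},\bm{r})\in\mathbb{R}_+^K\times\mathscr{C}^K} T(\bm{a},\bm{r}),\qquad T(\bm{a},\bm{r})=\frac12\Big\|\bm{x}-\sum_{k=1}^K a_k\gamma(\bm{r}_k)\Big\|_2^2,$$ has a solution (i.e. the infimum is attained) whenever one of the following holds: (i) $\phi<0$ and $\mu_m\le \frac{2}{C}\phi\|\bm{x}\|_2$ for all $m\in\{1,\dots,M\}$; (ii) $\phi\ge 0$ and $\mu_m\le 0$ for all $m\in\{1,\dots,M\}$.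
   Context: $\mathbb{R}_+=[0,+\infty)$ and $\|\cdot\|_2$ is the Euclidean norm. For $\bm{r}\in\mathbb{R}^3\setminus E_M$, $\gamma(\bm{r})\in\mathbb{R}^{MN}$ has components $\gamma_{m,n}(\bm{r})=\dfrac{\kappa\big(n/f_s-\|\bm{r}-\bm{r}^{\mathrm{mic}}_m\|_2/c\big)}{4\pi\|\bm{r}-\bm{r}^{\mathrm{mic}}_m\|_2}$ for $1\le m\le M$, $0\le n\le N-1$. The set $\mathscr{C}=\bigcap_{m=1}^M\overline{B(\bm{r}^{\mathrm{mic}}_m,cT_{\max})}\setminus E_M$ (closed Euclidean balls). For $\bm{a}=(a_k)\in\mathbb{R}_+^K$ and $\bm{r}=(\bm{r}_k)\in\mathscr{C}^K$, $\Gamma^K(\bm{a},\bm{r})=\sum_{k=1}^K a_k\gamma(\bm{r}_k)$. $\Gamma^K$ is called amplitude lower-bounded with constant $C>0$ if $\|\Gamma^K(\bm{a},\bm{r})\|_2\ge C\sum_{k=1}^K a_k$ for all $(\bm{a},\bm{r})\in\mathbb{R}_+^K\times\mathscr{C}^K$. *)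

From HB Require Import structures.
From mathcomp Require Import all_boot all_order all_algebra.
From mathcomp Require Import all_classical all_reals all_analysis.
Import Order.TTheory GRing.Theory Num.Theory.
Import numFieldNormedType.Exports.
Local Open Scope classical_set_scope.
Local Open Scope ring_scope.

Section Defs.
Variable R : realType.

Definition pt3 := 'I_3 -> R.

Definition dist3 (u v : pt3) : R := Num.sqrt (\sum_(i < 3) (u i - v i) ^+ 2).

Definition norm2 (M N : nat) (y : 'I_M -> 'I_N -> R) : R :=
  Num.sqrt (\sum_(m < M) \sum_(n < N) (y m n) ^+ 2).

Definition gamma (M N : nat) (c fs : R) (kappa : R -> R) (mic : 'I_M -> pt3)
    (r : pt3) : 'I_M -> 'I_N -> R :=
  fun m n => kappa (n%:R / fs - dist3 r (mic m) / c) / (4 * pi * dist3 r (mic m)).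

Definition Tmax (N : nat) (fs : R) : R := (N%:R - 1) / fs.

Definition inC (M N : nat) (c fs : R) (mic : 'I_M -> pt3) (r : pt3) : Prop :=
  (forall m : 'I_M, dist3 r (mic m) <= c * Tmax N fs) /\
  (forall m : 'I_M, r <> mic m).

Definition GammaK (M N K : nat) (c fs : R) (kappa : R -> R)
    (mic : 'I_M -> pt3) (a : 'I_K -> R) (r : 'I_K -> pt3) : 'I_M -> 'I_N -> R :=
  fun m n => \sum_(k < K) a k * gamma M N c fs kappa mic (r k) m n.

Definition amplitude_lower_bounded (M N K : nat) (c fs : R) (kappa : R -> R)
    (mic : 'I_M -> pt3) (C : R) : Prop :=
  forall (a : 'I_K -> R) (r : 'I_K -> pt3),
    (forall k, 0 <= a k) -> (forall k, inC M N c fs mic (r k)) ->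
    C * (\sum_(k < K) a k) <= norm2 M N (GammaK M N K c fs kappa mic a r).

Definition objT (M N K : nat) (c fs : R) (kappa : R -> R) (mic : 'I_M -> pt3)
    (x : 'I_M -> 'I_N -> R) (a : 'I_K -> R) (r : 'I_K -> pt3) : R :=
  2^-1 * (norm2 M N (fun m n => x m n - GammaK M N K c fs kappa mic a r m n)) ^+ 2.

Definition phi (N : nat) (c fs : R) (kappa : R -> R) : R :=
  inf [set (\sum_(n < N) kappa (n%:R / fs) * kappa (n%:R / fs - t) / (4 * pi * c * t))
      | t in [set t : R | 0 < t]].

Definition mu (M N : nat) (fs : R) (kappa : R -> R) (x : 'I_M -> 'I_N -> R)
    (m : 'I_M) : R :=
  \sum_(n < N) x m n * kappa (n%:R / fs).

End Defs.

From HB Require Import structures.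
From mathcomp Require Import all_boot all_order all_algebra.
From mathcomp Require Import all_classical all_reals all_analysis.
From mathcomp Require Import lra ring.
Import Order.TTheory GRing.Theory Num.Theory.
Import numFieldNormedType.Exports.
Local Open Scope classical_set_scope.
Local Open Scope ring_scope.

(* Reparametrize each source by its position [r_k] and the rescaled amplitude
   [b_k = a_k / rho(r_k)], where [rho(r) = min(1, dist(r, E_M))]: the atom [rho(r) gamma(r)]
   extends continuously to the microphones, so the objective becomes a continuous function [F] of
   [(b, r)].  Whenever [T(a, r) <= |x|^2 / 2], amplitude lower-boundedness gives
   [sum_k a_k <= 2 |x| / C], and reading the first sample on the channel of the microphone nearest
   to [r_k] then gives [a_k <= B0 rho(r_k)]; so all competitive [(b, r)] lie in a compact set on
   which [F] attains its minimum.  A minimizer may put sources on microphones, but conditions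
   (i)/(ii) make the residual negatively correlated with such degenerate atoms, so dropping them
   does not increase the objective; what remains is a minimizer of [T]. *)

Section RealContinuity.
Context {R : realType} {T : topologicalType}.

Lemma continuous_sum n (f : 'I_n -> T -> R) :
  (forall i, continuous (f i)) -> continuous (fun z => \sum_(i < n) f i z).
Proof. by move=> fc z; apply: cvg_big => // [|i _]; [exact: add_continuous | exact: fc]. Qed.

Lemma continuous_bigmin n (f : 'I_n -> T -> R) (b : R) :
  (forall i, continuous (f i)) -> continuous (fun z => \big[Order.min/b]_(i < n) f i z).
Proof. by move=> fc z; apply: cvg_big => // [|i _]; [exact: min_continuous | exact: fc]. Qed.

Lemma continuous_mul (f g : T -> R) :
  continuous f -> continuous g -> continuous (fun z => f z * g z).
Proof. by move=> fc gc z; apply: cvgM; [exact: fc | exact: gc]. Qed.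

Lemma continuous_sqr (f : T -> R) : continuous f -> continuous (fun z => f z ^+ 2).
Proof. by move=> fc z; exact: (continuous_comp (fc z) (@exprn_continuous R 2 _)). Qed.

Lemma closed_le_continuous (f g : T -> R) :
  continuous f -> continuous g -> closed [set z | f z <= g z].
Proof.
move=> fc gc; have -> : [set z | f z <= g z] = (fun z => g z - f z) @^-1` [set y | 0 <= y].
  by apply/seteqP; split => z /=; rewrite subr_ge0.
by apply: preimage_closed => [z _|]; [apply: cvgB; [exact: gc | exact: fc] | exact: closed_ge].
Qed.

(* Near a zero of [D m] the minimum is attained at [D m], so the ratio is identically 1 there. *)
Lemma continuous_bigmin_ratio {M : nat} (D : 'I_M -> T -> R) (m : 'I_M) :
  (forall j, continuous (D j)) -> (forall j z, 0 <= D j z) ->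
  (forall j z, D j z = 0 -> D m z = 0 -> D j = D m) ->
  continuous (fun z => if D m z == 0 then 1 else (\big[Order.min/1]_(j < M) D j z) / D m z).
Proof.
move=> Dc D_ge0 Deq z0; rewrite /prop_for /continuous_at /=.
have [Dm0|Dm_neq0] := eqVneq (D m z0) 0.
  apply: cvg_near_cst.
  have Dm_lt1 : \forall z \near z0, D m z < 1.
    by apply: (@cvgr_lt R T (nbhs z0) _ (D m) _ (Dc m z0)); rewrite Dm0.
  have Dm_min : \forall z \near z0, forall j, D m z <= D j z.
    apply: filter_forall => j; have [Dj0|Dj_neq0] := eqVneq (D j z0) 0.
      by apply: nearW => z; rewrite (Deq j z0 Dj0 Dm0).
    have : \forall z \near z0, 0 < D j z - D m z.
      apply: (cvgr_gt (D j z0 - D m z0)); first by apply: cvgB; [exact: Dc | exact: Dc].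
      by rewrite Dm0 subr0 lt_def Dj_neq0 D_ge0.
    by apply: filterS => z; rewrite subr_gt0 => /ltW.
  near=> z; have Dm_le : forall j, D m z <= D j z by near: z.
  have -> : \big[Order.min/1]_(j < M) D j z = D m z.
    apply/eqP; rewrite eq_le bigmin_le /=.
    by apply: le_bigmin => [|j _]; [apply: ltW; near: z | exact: Dm_le].
  by case: eqP => // /eqP Dm_neq0; rewrite divff.
apply: (@cvg_trans _ ((fun z => (\big[Order.min/1]_(j < M) D j z) / D m z) @ z0)).
  apply: near_eq_cvg; near=> z; suff /negbTE -> : D m z != 0 by [].
  apply: lt0r_neq0; near: z; apply: (@cvgr_gt R T (nbhs z0) _ (D m) _ (Dc m z0)).
  by rewrite lt_def Dm_neq0 D_ge0.
by apply: cvgM; [exact: continuous_bigmin | apply: cvgV => //; exact: Dc].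
Unshelve. all: by end_near.
Qed.
End RealContinuity.

Lemma normr_le_sqrt {R : rcfType} (v s : R) : v ^+ 2 <= s -> `|v| <= Num.sqrt s.
Proof. by move=> h; rewrite -sqrtr_sqr ler_sqrt // (le_trans _ h) ?sqr_ge0. Qed.

Lemma quotient_lower_bound {R : realFieldType} (u B d delta : R) :
  0 < d -> 0 < delta -> 0 <= B -> - B <= u -> (d <= delta -> 0 <= u) ->
  - (B / delta) <= u / d.
Proof.
move=> d_gt0 delta_gt0 B_ge0 Bu u_ge0; have [d_le|delta_lt] := leP d delta.
  apply: (@le_trans _ _ 0); first by rewrite oppr_le0 divr_ge0 // ltW.
  by rewrite divr_ge0 ?u_ge0 // ltW.
apply: (@le_trans _ _ (- B / d)); last by rewrite ler_pM2r ?invr_gt0.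
by rewrite mulNr lerN2 ler_wpM2l // lef_pV2 ?posrE ?ltW.
Qed.

Section Kernel.
Context {R : realType} {kappa : R -> R}.
Hypothesis kappa_cont : continuous kappa.

Lemma bounded_on_left_ray (L : R) : kappa t @[t --> -oo] --> 0 ->
  exists2 B, 0 <= B & forall u, u <= L -> `|kappa u| <= B.
Proof.
move=> kappa_ninfty; have [A [_ kappa_small]] : \forall t \near -oo, `|kappa t| < 1.
  have : `|kappa t| @[t --> -oo] --> `|0 : R| by exact: cvg_norm.
  by rewrite normr0 => /(@cvgr_lt R R (ninfty_nbhs R))/(_ 1 ltr01).
pose a := Num.min A L; have aL : a <= L by rewrite ge_min lexx orbT.
have [u0 _ u0_max] := EVT_max aL (continuous_subspaceT (fun u => cvg_norm (kappa_cont u))).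
exists (1 + `|kappa u0|) => [|u uL]; first by rewrite addr_ge0.
have [uA|Au] := ltP u A; first by rewrite (le_trans (ltW (kappa_small u uA))) ?lerDl.
rewrite (le_trans (u0_max u _)) ?lerDr // in_itv /= uL andbT.
by rewrite (le_trans _ Au) // ge_min lexx.
Qed.

Lemma kernel_gt_half_near0 {c : R} : 0 < c -> 0 < kappa 0 ->
  exists2 delta, 0 < delta <= 1 & forall d, 0 <= d <= delta -> kappa 0 / 2 < kappa (- (d / c)).
Proof.
move=> c_gt0 kappa0_gt0.
have /(nbhs_ballP 0)[e e_gt0 kappa_big] : \forall u \near 0, kappa 0 / 2 < kappa u.
  apply: (@cvgr_gt R R (nbhs (0 : R)) _ kappa _ (kappa_cont 0)).
  by rewrite ltr_pdivrMr // ltr_pMr // ltr1n.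
exists (Num.min 1 (c * e / 2)) => [|d /andP[d_ge0 d_le]].
  by rewrite lt_min ltr01 !divr_gt0 ?mulr_gt0 //= ge_min lexx.
apply: kappa_big; rewrite /ball /= sub0r opprK ger0_norm; last by rewrite divr_ge0 // ltW.
have d_le' : d <= c * e / 2 by rewrite (le_trans d_le) // ge_min lexx orbT.
rewrite ltr_pdivrMr // mulrC (le_lt_trans d_le') //.
by rewrite ltr_pdivrMr // ltr_pMr ?mulr_gt0 // ltr1n.
Qed.
End Kernel.

Section PhiLowerBound.
Context {R : realType} (c fs : R) (N : nat) (kappa : R -> R).
Hypotheses (c_gt0 : 0 < c) (fs_gt0 : 0 < fs) (N_gt0 : (0 < N)%N).
Hypotheses (kappa_cont : continuous kappa) (kappa0_gt0 : 0 < kappa 0).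
Hypothesis kappa_ninfty : kappa t @[t --> -oo] --> 0.

Definition phi_term (t : R) : R :=
  \sum_(n < N) kappa (n%:R / fs) * kappa (n%:R / fs - t) / (4 * pi * c * t).

(* Without a lower bound, the infimum [phi] would be a junk value. *)
Lemma phi_term_bounded_below : exists l, forall t, 0 < t -> l <= phi_term t.
Proof.
pose h t := \sum_(n < N) kappa (n%:R / fs) * kappa (n%:R / fs - t).
have h0_gt0 : 0 < h 0.
  rewrite /h (bigD1 (Ordinal N_gt0)) //= mul0r subr0 -expr2 ltr_pwDl ?exprn_gt0 //.
  by apply: sumr_ge0 => n _; rewrite subr0 -expr2 sqr_ge0.
have h_cont : {for 0, continuous h}.
  apply: continuous_sum => n z; apply: cvgM; first exact: cvg_cst.
  by apply: continuous_comp; [apply: cvgB; [exact: cvg_cst | exact: cvg_id] | exact: kappa_cont].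
have /(nbhs_ballP 0)[e e_gt0 h_pos] : \forall t \near 0, 0 < h t.
  exact: (@cvgr_gt R R (nbhs (0 : R)) _ h _ h_cont 0 h0_gt0).
have [B B_ge0 kappa_le] := bounded_on_left_ray kappa_cont ((N%:R - 1) / fs) kappa_ninfty.
have c4_gt0 : 0 < 4 * pi * c by rewrite !mulr_gt0 // pi_gt0.
pose H := \sum_(n < N) `|kappa (n%:R / fs)| * B.
exists (- (H / (4 * pi * c * (e / 2)))) => t t_gt0.
rewrite /phi_term -mulr_suml -/(h t); apply: quotient_lower_bound.
- by rewrite mulr_gt0.
- by rewrite mulr_gt0 ?divr_gt0.
- by apply: sumr_ge0 => n _; rewrite mulr_ge0.
- rewrite /h /H -sumrN; apply: ler_sum => n _; rewrite lerNl.
  rewrite (le_trans (ler_norm _)) // normrN normrM ler_wpM2l // kappa_le //.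
  apply: (@le_trans _ _ (n%:R / fs)); first by rewrite gerBl ltW.
  by rewrite ler_pM2r ?invr_gt0 // lerBrDr natr1 ler_nat ltn_ord.
- rewrite ler_pM2l // => t_le; apply/ltW/h_pos.
  rewrite /ball /= sub0r normrN gtr0_norm // (le_lt_trans t_le) //.
  by rewrite ltr_pdivrMr // ltr_pMr // ltr1n.
Qed.

Lemma phi_le_phi_term t : 0 < t -> phi R N c fs kappa <= phi_term t.
Proof.
move=> t_gt0; apply: ge_inf; last by exists t.
by have [l l_le] := phi_term_bounded_below; exists l => _ [s s_gt0 <-]; exact: l_le.
Qed.
End PhiLowerBound.

Section SquaredNorm.
Context {R : realType} (M N : nat).
Implicit Types y w : 'I_M -> 'I_N -> R.

Definition sqnorm2 y : R := \sum_(m < M) \sum_(n < N) y m n ^+ 2.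

Definition dot2 y w : R := \sum_(m < M) \sum_(n < N) y m n * w m n.

Lemma sqnorm2_ge0 y : 0 <= sqnorm2 y.
Proof. by apply: sumr_ge0 => m _; apply: sumr_ge0 => n _; exact: sqr_ge0. Qed.

Lemma norm2_ge0 y : 0 <= norm2 R M N y.
Proof. exact: sqrtr_ge0. Qed.

Lemma sqr_norm2 y : norm2 R M N y ^+ 2 = sqnorm2 y.
Proof. by rewrite /norm2 sqr_sqrtr // sqnorm2_ge0. Qed.

Lemma normr_le_norm2 y m n : `|y m n| <= norm2 R M N y.
Proof.
apply: normr_le_sqrt; rewrite (bigD1 m) //= (bigD1 n) //= -addrA lerDl.
rewrite addr_ge0 ?sumr_ge0 // => [j _|i _]; first exact: sqr_ge0.
by apply: sumr_ge0 => j _; exact: sqr_ge0.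
Qed.

Lemma norm2_le_twice y w :
  sqnorm2 (fun m n => y m n - w m n) <= sqnorm2 y -> norm2 R M N w <= 2 * norm2 R M N y.
Proof.
move=> res_le; rewrite -ler_sqr ?nnegrE ?mulr_ge0 ?norm2_ge0 // exprMn !sqr_norm2.
apply: (@le_trans _ _ (2 * sqnorm2 y + 2 * sqnorm2 (fun m n => y m n - w m n))); last lra.
rewrite /sqnorm2 !mulr_sumr -big_split; apply: ler_sum => m _.
rewrite !mulr_sumr -big_split; apply: ler_sum => n _ /=.
by rewrite -subr_ge0 (_ : _ - _ = (2 * y m n - w m n) ^+ 2) ?sqr_ge0 //; ring.
Qed.

Lemma sqnorm2_le_subr y w : dot2 y w <= 0 -> sqnorm2 y <= sqnorm2 (fun m n => y m n - w m n).
Proof.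
have -> : sqnorm2 (fun m n => y m n - w m n) = sqnorm2 y + sqnorm2 w - 2 * dot2 y w.
  rewrite /sqnorm2 /dot2 mulr_sumr -!big_split -sumrB; apply: eq_bigr => m _.
  by rewrite mulr_sumr -!big_split -sumrB; apply: eq_bigr => n _ /=; ring.
by have := sqnorm2_ge0 w; lra.
Qed.

Lemma dot2_sumr K y (w : 'I_K -> 'I_M -> 'I_N -> R) :
  dot2 y (fun m n => \sum_(k < K) w k m n) = \sum_(k < K) dot2 y (w k).
Proof.
rewrite /dot2 [RHS]exchange_big; apply: eq_bigr => m _ /=.
by rewrite [RHS]exchange_big; apply: eq_bigr => n _; rewrite mulr_sumr.
Qed.
End SquaredNorm.

Section Points.
Context {R : realType}.
Implicit Types r s : pt3 R.

Lemma dist3_ge0 r s : 0 <= dist3 R r s.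
Proof. exact: sqrtr_ge0. Qed.

Lemma dist3_eq0 r s : dist3 R r s = 0 -> r = s.
Proof.
move/eqP; rewrite sqrtr_eq0 => sum_le0; apply: funext => i; apply/eqP.
rewrite -subr_eq0 -sqrf_eq0 eq_le sqr_ge0 andbT (le_trans _ sum_le0) //.
by rewrite (bigD1 i) //= lerDl; apply: sumr_ge0 => j _; exact: sqr_ge0.
Qed.

Lemma dist3_xx r : dist3 R r r = 0.
Proof. by rewrite /dist3 big1 ?sqrtr0 // => i _; rewrite subrr expr0n. Qed.

Lemma normr_sub_le_dist3 r s i : `|r i - s i| <= dist3 R r s.
Proof.
apply: normr_le_sqrt; rewrite (bigD1 i) //= lerDl.
by apply: sumr_ge0 => j _; exact: sqr_ge0.
Qed.

Lemma continuous_dist3 {T : topologicalType} (p : T -> pt3 R) s :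
  (forall i, continuous (fun z => p z i)) -> continuous (fun z => dist3 R (p z) s).
Proof.
move=> pc z; apply: continuous_comp; last exact: sqrt_continuous.
apply: continuous_sum => i; apply: continuous_sqr => {}z.
by apply: cvgB; [exact: pc | exact: cvg_cst].
Qed.
End Points.

Section Microphones.
Context {R : realType} {M : nat} (mic : 'I_M -> pt3 R).
Implicit Types r : pt3 R.

Definition mdist r m : R := dist3 R r (mic m).

Definition rho r : R := \big[Order.min/1]_(m < M) mdist r m.

Definition weight m r : R := if mdist r m == 0 then 1 else rho r / mdist r m.

Lemma mdist_gt0 {r m} : r <> mic m -> 0 < mdist r m.
Proof. by move=> r_neq; rewrite lt_def dist3_ge0 andbT; apply/eqP => /dist3_eq0. Qed.

Lemma rho_ge0 r : 0 <= rho r.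
Proof. by apply: le_bigmin => [|m _]; [exact: ler01 | exact: dist3_ge0]. Qed.

Lemma rho_le_mdist r m : rho r <= mdist r m.
Proof. exact: bigmin_le. Qed.

Lemma rho_eq1_or_mdist r : rho r = 1 \/ exists m, rho r = mdist r m.
Proof.
apply: (big_rec (fun v => v = 1 \/ exists m, v = mdist r m)); first by left.
by move=> m v _ IH; rewrite /Order.min; case: ifP => _; [right; exists m | exact: IH].
Qed.

Lemma rho_gt0 {r} : (forall m, r <> mic m) -> 0 < rho r.
Proof.
by move=> r_neq; have [->|[m ->]] := rho_eq1_or_mdist r; [exact: ltr01 | exact: mdist_gt0].
Qed.

Lemma neq_mic_of_rho_gt0 r m : 0 < rho r -> r <> mic m.
Proof.
move=> rho_pos r_eq; have := lt_le_trans rho_pos (rho_le_mdist r m).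
by rewrite /mdist r_eq dist3_xx ltxx.
Qed.

Section Continuity.
Context {T : topologicalType} {p : T -> pt3 R}.
Hypothesis p_cont : forall i, continuous (fun z => p z i).

Lemma continuous_mdist m : continuous (fun z => mdist (p z) m).
Proof. exact: continuous_dist3. Qed.

Lemma continuous_rho : continuous (fun z => rho (p z)).
Proof. by apply: continuous_bigmin => m; exact: continuous_mdist. Qed.

Lemma continuous_weight m : continuous (fun z => weight m (p z)).
Proof.
rewrite /weight /rho; apply: (continuous_bigmin_ratio (fun j z => mdist (p z) j)) => [j|j z|j z].
- exact: continuous_mdist.
- exact: dist3_ge0.
- by move=> /dist3_eq0 pj /dist3_eq0 pm; apply: funext => w; rewrite /mdist -pj pm.
Qed.
End Continuity.
End Microphones.

Section RegularizedAtoms.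
Context {R : realType} (c fs : R) {M N : nat} (mic : 'I_M -> pt3 R) (kappa : R -> R).

(* [rho r * gamma r] away from the microphones ([ratom_gamma]), but continuous everywhere: the
   factor [rho r] absorbs the [1 / mdist] singularity of [gamma]. *)
Definition ratom m (n : 'I_N) r : R :=
  kappa (n%:R / fs - mdist mic r m / c) * weight mic m r / (4 * pi).

Lemma ratom_gamma m n r :
  (forall j, r <> mic j) -> ratom m n r = rho mic r * gamma R M N c fs kappa mic r m n.
Proof.
move=> r_neq; have mdist_neq0 := lt0r_neq0 (mdist_gt0 mic (r_neq m)).
rewrite /ratom /weight (negbTE mdist_neq0) /gamma -/(mdist mic r m).
have := pi_gt0 R; move: (pi : R) => p p_gt0.
by field; rewrite mdist_neq0 (lt0r_neq0 p_gt0).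
Qed.

Lemma ratom_rho0 m n r : rho mic r = 0 ->
  ratom m n r = if mdist mic r m == 0 then kappa (n%:R / fs) / (4 * pi) else 0.
Proof.
rewrite /ratom /weight => ->; case: eqP => [->|_]; last by rewrite mul0r mulr0 mul0r.
by rewrite mul0r subr0 mulr1.
Qed.

Lemma continuous_ratom {T : topologicalType} (p : T -> pt3 R) m n :
  continuous kappa -> (forall i, continuous (fun z => p z i)) ->
  continuous (fun z => ratom m n (p z)).
Proof.
move=> kappa_cont p_cont z; apply: cvgM; last exact: cvg_cst.
apply: cvgM; last exact: continuous_weight.
apply: (@continuous_comp _ _ _ (fun z => n%:R / fs - mdist mic (p z) m / c) kappa).
  by apply: cvgB; [exact: cvg_cst | apply: cvgM; [exact: continuous_mdist | exact: cvg_cst]].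
exact: kappa_cont.
Qed.

Lemma continuous_objective {T : topologicalType} {K : nat} (x : 'I_M -> 'I_N -> R)
    (b : T -> 'I_K -> R) (p : T -> 'I_K -> pt3 R) :
  continuous kappa -> (forall k, continuous (fun z => b z k)) ->
  (forall k i, continuous (fun z => p z k i)) ->
  continuous (fun z => 2^-1 * sqnorm2 M N
    (fun m n => x m n - \sum_(k < K) b z k * ratom m n (p z k))).
Proof.
move=> kappa_cont b_cont p_cont z; apply: cvgM; first exact: cvg_cst.
apply: continuous_sum => m; apply: continuous_sum => n; apply: continuous_sqr => {}z.
apply: cvgB; first exact: cvg_cst.
apply: continuous_sum => k {}z; apply: cvgM; first exact: b_cont.
exact: continuous_ratom.
Qed.
End RegularizedAtoms.

Import ArrowAsProduct.

(* A point [z] of [param R K] encodes, for every source [k], a position [pos z k] and a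
   rescaled amplitude [amp z k], standing for the amplitude [amp z k * rho (pos z k)]. *)
Definition param (R : realType) (K : nat) := ('I_K * option 'I_3) -> R.

Section Reparametrization.
Context {R : realType} (c fs : R) {M N K : nat} (mic : 'I_M -> pt3 R) (kappa : R -> R).
Implicit Types z : param R K.

Definition amp z k : R := z (k, None).

Definition pos z k : pt3 R := fun i => z (k, Some i).

Definition Fobj (x : 'I_M -> 'I_N -> R) z : R :=
  2^-1 * sqnorm2 M N
    (fun m n => x m n - \sum_(k < K) amp z k * ratom c fs mic kappa m n (pos z k)).

Lemma continuous_amp k : continuous (fun z : param R K => amp z k).
Proof. exact: (@proj_continuous _ (fun=> R) (k, None)). Qed.

Lemma continuous_pos k i : continuous (fun z : param R K => pos z k i).
Proof. exact: (@proj_continuous _ (fun=> R) (k, Some i)). Qed.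

Lemma continuous_Fobj (x : 'I_M -> 'I_N -> R) : continuous kappa -> continuous (Fobj x).
Proof.
by move=> kappa_cont; exact: continuous_objective kappa_cont continuous_amp continuous_pos.
Qed.
End Reparametrization.

Section AmplitudeBound.
Context {R : realType} (c fs : R) {M N K : nat} (mic : 'I_M -> pt3 R) (kappa : R -> R).
Variables (C L : R).
Hypotheses (c_gt0 : 0 < c) (N_gt0 : (0 < N)%N) (C_gt0 : 0 < C) (L_ge0 : 0 <= L).
Hypotheses (kappa_cont : continuous kappa) (kappa0_gt0 : 0 < kappa 0).
Hypothesis kappa_ninfty : kappa t @[t --> -oo] --> 0.
Hypothesis amp_lb : amplitude_lower_bounded R M N K c fs kappa mic C.

Local Notation gam := (gamma R M N c fs kappa mic).
Local Notation Gam := (GammaK R M N K c fs kappa mic).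
Local Notation inCC := (inC R M N c fs mic).

Lemma sum_amp_le {a r} : (forall k, 0 <= a k) -> (forall k, inCC (r k)) ->
  norm2 R M N (Gam a r) <= L -> \sum_(k < K) a k <= L / C.
Proof.
by move=> a_ge0 r_in Gam_le; rewrite ler_pdivlMr // mulrC (le_trans (amp_lb a r a_ge0 r_in)).
Qed.

Section KernelConstants.
Variables (B delta : R).
Hypotheses (B_ge0 : 0 <= B) (kappa_le : forall u, u <= 0 -> `|kappa u| <= B).
Hypotheses (delta_gt0 : 0 < delta) (delta_le1 : delta <= 1).
Hypothesis kappa_near0 : forall d, 0 <= d <= delta -> kappa 0 / 2 < kappa (- (d / c)).

Let n0 : 'I_N := Ordinal N_gt0.

Let pi4_gt0 : 0 < 4 * pi :> R.
Proof. by rewrite mulr_gt0 // pi_gt0. Qed.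

Lemma gamma_first_sample r m :
  gam r m n0 = kappa (- (mdist mic r m / c)) / (4 * pi * mdist mic r m).
Proof. by rewrite /gamma /= mul0r sub0r. Qed.

Lemma gamma_first_sample_lb r m : r <> mic m -> - (B / (4 * pi * delta)) <= gam r m n0.
Proof.
move=> r_neq; have d_gt0 := mdist_gt0 mic r_neq; rewrite gamma_first_sample.
apply: quotient_lower_bound; rewrite ?mulr_gt0 ?pi_gt0 //.
  have u_le0 : - (mdist mic r m / c) <= 0 by rewrite oppr_le0 divr_ge0 ?ltW.
  by have := kappa_le _ u_le0; rewrite ler_norml => /andP[].
move=> d_le; rewrite (ler_pM2l pi4_gt0) in d_le.
have kappa_big : kappa 0 / 2 < kappa (- (mdist mic r m / c)) by rewrite kappa_near0 // d_le ltW.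
by rewrite ltW // (lt_trans _ kappa_big) // divr_gt0.
Qed.

Lemma gamma_first_sample_near r m : r <> mic m -> mdist mic r m <= delta ->
  kappa 0 / 2 / (4 * pi * mdist mic r m) <= gam r m n0.
Proof.
move=> r_neq d_le; have d_gt0 := mdist_gt0 mic r_neq.
rewrite gamma_first_sample ler_pM2r ?invr_gt0 ?mulr_gt0 ?pi_gt0 //.
by apply/ltW/kappa_near0; rewrite d_le ltW.
Qed.

Let W := L + L / C * (B / (4 * pi * delta)).

(* Read off the first sample of the channel of the nearest microphone, where the atom of [r k]
   is of order [1 / rho (r k)] while every other atom is bounded below. *)
Lemma amp_le_near_mic {a r k} : (forall k, 0 <= a k) -> (forall k, inCC (r k)) ->
  norm2 R M N (Gam a r) <= L -> rho mic (r k) < delta ->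
  a k <= 8 * pi / kappa 0 * W * rho mic (r k).
Proof.
move=> a_ge0 r_in Gam_le rho_lt.
have [rho1|[m rhoE]] := rho_eq1_or_mdist mic (r k).
  by move: rho_lt; rewrite rho1 ltNge delta_le1.
have rho_pos := rho_gt0 mic (proj2 (r_in k)).
have near_k : a k * (kappa 0 / 2 / (4 * pi * rho mic (r k))) <= a k * gam (r k) m n0.
  rewrite ler_wpM2l // rhoE; apply: gamma_first_sample_near; first exact: (proj2 (r_in k)).
  by rewrite -rhoE ltW.
have sum_far : \sum_(j < K | j != k) a j <= L / C.
  by rewrite (le_trans _ (sum_amp_le a_ge0 r_in Gam_le)) // [leRHS](bigD1 k) //= lerDr.
have far : - (L / C * (B / (4 * pi * delta))) <= \sum_(j < K | j != k) a j * gam (r j) m n0.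
  apply: (@le_trans _ _ (\sum_(j < K | j != k) - (a j * (B / (4 * pi * delta))))).
    rewrite sumrN -mulr_suml lerN2; apply: ler_wpM2r => //.
    by rewrite divr_ge0 // ltW // mulr_gt0.
  apply: ler_sum => j _; rewrite -mulrN ler_wpM2l //.
  exact: gamma_first_sample_lb (proj2 (r_in j) m).
have := le_trans (ler_norm _) (le_trans (normr_le_norm2 _ _ _ m n0) Gam_le).
rewrite /GammaK (bigD1 k) //= => Gam_mn0_le.
have key : a k * (kappa 0 / 2 / (4 * pi * rho mic (r k))) <= W by rewrite /W; lra.
have -> : 8 * pi / kappa 0 * W * rho mic (r k) = W / (kappa 0 / 2 / (4 * pi * rho mic (r k))).
  have := pi_gt0 R; move: (pi : R) => p p_gt0.
  by field; rewrite (gt_eqF kappa0_gt0) (gt_eqF rho_pos) (gt_eqF p_gt0).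
by rewrite ler_pdivlMr // !divr_gt0 // mulr_gt0.
Qed.

Lemma amp_le_rho a r k : (forall k, 0 <= a k) -> (forall k, inCC (r k)) ->
  norm2 R M N (Gam a r) <= L -> a k <= (L / C / delta + 8 * pi / kappa 0 * W) * rho mic (r k).
Proof.
move=> a_ge0 r_in Gam_le; have LC_ge0 : 0 <= L / C by rewrite divr_ge0 // ltW.
have W_ge0 : 0 <= W by rewrite addr_ge0 // mulr_ge0 // divr_ge0 // ltW // mulr_gt0.
have coef_ge0 : 0 <= 8 * pi / kappa 0 * W.
  by rewrite mulr_ge0 // divr_ge0 ?mulr_ge0 // ltW // pi_gt0.
have rho_nneg := rho_ge0 mic (r k).
have [delta_le|rho_lt] := leP delta (rho mic (r k)); last first.
  have := amp_le_near_mic a_ge0 r_in Gam_le rho_lt.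
  have : 0 <= L / C / delta * rho mic (r k) by rewrite !mulr_ge0 // invr_ge0 ltW.
  by rewrite mulrDl; lra.
have ak_le : a k <= L / C.
  rewrite (le_trans _ (sum_amp_le a_ge0 r_in Gam_le)) // (bigD1 k) //= lerDl.
  by apply: sumr_ge0 => j _.
have : L / C <= L / C / delta * rho mic (r k).
  by rewrite -mulrA ler_peMr // mulrC ler_pdivlMr // mul1r.
have := mulr_ge0 coef_ge0 rho_nneg.
by rewrite mulrDl; lra.
Qed.
End KernelConstants.

Lemma exists_amp_le_rho : exists B0, forall a r,
  (forall k, 0 <= a k) -> (forall k, inCC (r k)) -> norm2 R M N (Gam a r) <= L ->
  forall k, a k <= B0 * rho mic (r k).
Proof.
have [B B_ge0 kappa_le] := bounded_on_left_ray kappa_cont 0 kappa_ninfty.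
have [delta /andP[delta_gt0 delta_le1] kappa_near0] :=
  kernel_gt_half_near0 kappa_cont c_gt0 kappa0_gt0.
exists (L / C / delta + 8 * pi / kappa 0 * (L + L / C * (B / (4 * pi * delta)))).
by move=> a r a_ge0 r_in Gam_le k; apply: amp_le_rho.
Qed.
End AmplitudeBound.

Section Existence.
Context {R : realType} (c fs : R) {M N K : nat} (mic : 'I_M -> pt3 R) (kappa : R -> R).
Variables (x : 'I_M -> 'I_N -> R) (C B0 : R) (r0 : pt3 R).
Hypotheses (c_gt0 : 0 < c) (fs_gt0 : 0 < fs) (M_gt0 : (0 < M)%N) (N_gt0 : (0 < N)%N).
Hypotheses (kappa_cont : continuous kappa) (kappa0_gt0 : 0 < kappa 0).
Hypothesis kappa_ninfty : kappa t @[t --> -oo] --> 0.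
Hypotheses (C_gt0 : 0 < C) (amp_lb : amplitude_lower_bounded R M N K c fs kappa mic C).

Local Notation gam := (gamma R M N c fs kappa mic).
Local Notation Gam := (GammaK R M N K c fs kappa mic).
Local Notation inCC := (inC R M N c fs mic).
Local Notation ratom := (ratom c fs mic kappa).
Local Notation Fx := (Fobj c fs mic kappa x).
Local Notation objT := (objT R M N K c fs kappa mic x).
Local Notation phi0 := (phi R N c fs kappa).
Local Notation X := (norm2 R M N x).

Hypothesis sign_condition :
  (phi0 < 0 /\ forall m, mu R M N fs kappa x m <= 2 / C * phi0 * X) \/
  (0 <= phi0 /\ forall m, mu R M N fs kappa x m <= 0).
Hypothesis r0_in : inCC r0.
Hypothesis amp_le_rho : forall a r, (forall k, 0 <= a k) -> (forall k, inCC (r k)) ->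
  norm2 R M N (Gam a r) <= 2 * X -> forall k, a k <= B0 * rho mic (r k).

Lemma sum_gamma_kappa r m : r <> mic m ->
  \sum_(n < N) gam r m n * kappa (n%:R / fs) = phi_term c fs N kappa (mdist mic r m / c).
Proof.
move=> r_neq; have d_gt0 := mdist_gt0 mic r_neq.
rewrite /phi_term; apply: eq_bigr => n _; rewrite /gamma -/(mdist mic r m).
have := pi_gt0 R; move: (pi : R) => p p_gt0.
by field; rewrite (gt_eqF d_gt0) (gt_eqF p_gt0) (gt_eqF c_gt0).
Qed.

Lemma residual_kappa_le0 a r : (forall k, 0 <= a k) -> (forall k, inCC (r k)) ->
  \sum_(k < K) a k <= 2 * X / C ->
  forall m, \sum_(n < N) (x m n - Gam a r m n) * kappa (n%:R / fs) <= 0.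
Proof.
move=> a_ge0 r_in sum_le m; have d_gt0 k := mdist_gt0 mic (proj2 (r_in k) m).
have -> : \sum_(n < N) (x m n - Gam a r m n) * kappa (n%:R / fs) =
    mu R M N fs kappa x m - \sum_(k < K) a k * phi_term c fs N kappa (mdist mic (r k) m / c).
  rewrite /mu; under eq_bigr do rewrite mulrBl; rewrite sumrB; congr (_ - _).
  rewrite /GammaK; under eq_bigr do rewrite mulr_suml.
  rewrite exchange_big; apply: eq_bigr => k _ /=.
  under eq_bigr do rewrite -mulrA.
  by rewrite -mulr_sumr (sum_gamma_kappa _ _ (proj2 (r_in k) m)).
have phi_le : phi0 * \sum_(k < K) a k <=
    \sum_(k < K) a k * phi_term c fs N kappa (mdist mic (r k) m / c).
  rewrite mulr_sumr; apply: ler_sum => k _; rewrite mulrC ler_wpM2l //.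
  by apply: phi_le_phi_term => //; rewrite divr_gt0.
have sum_ge0 : 0 <= \sum_(k < K) a k by apply: sumr_ge0.
case: sign_condition => [[phi_lt0 mu_le]|[phi_ge0 mu_le]]; have := mu_le m.
  have : phi0 * (2 * X / C) <= phi0 * \sum_(k < K) a k by rewrite ler_wnM2l // ltW.
  have -> : 2 / C * phi0 * X = phi0 * (2 * X / C) by ring.
  lra.
have := mulr_ge0 phi_ge0 sum_ge0; lra.
Qed.

(* An atom sitting on a microphone is a multiple of the kernel samples on that channel, with
   which the residual is negatively correlated by [residual_kappa_le0]. *)
Lemma dot2_residual_ratom_le0 a r b s : (forall k, 0 <= a k) -> (forall k, inCC (r k)) ->
  \sum_(k < K) a k <= 2 * X / C -> 0 <= b -> rho mic s = 0 ->
  dot2 M N (fun m n => x m n - Gam a r m n) (fun m n => b * ratom m n s) <= 0.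
Proof.
move=> a_ge0 r_in sum_le b_ge0 rho0; apply: sumr_le0 => m _.
under eq_bigr do rewrite ratom_rho0 //.
have [_|_] := eqVneq (mdist mic s m) 0; last by rewrite big1 // => n _; rewrite !mulr0.
rewrite (eq_bigr (fun n => b / (4 * pi) * ((x m n - Gam a r m n) * kappa (n%:R / fs))));
  last by move=> n _ /=; ring.
rewrite -mulr_sumr mulr_ge0_le0 ?residual_kappa_le0 // divr_ge0 // ltW // mulr_gt0 //.
exact: pi_gt0.
Qed.

(* The last constraint keeps [\sum_k a_k <= 2 |x| / C] after dropping the sources that sit on
   microphones, as [residual_kappa_le0] requires. *)
Let admissible : set (param R K) :=
  \bigcap_k [set z | 0 <= amp z k] `&` \bigcap_k [set z | amp z k <= B0] `&`
  \bigcap_(p : 'I_K * 'I_M) [set z | mdist mic (pos z p.1) p.2 <= c * Tmax R N fs] `&`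
  [set z | C * \sum_(k < K) amp z k * rho mic (pos z k) <= 2 * X].

Lemma compact_admissible : compact admissible.
Proof.
pose m0 : 'I_M := Ordinal M_gt0; pose cT := c * Tmax R N fs.
pose box (p : 'I_K * option 'I_3) : set R :=
  if p.2 is Some i then `[mic m0 i - cT, mic m0 i + cT]%classic else `[0, B0]%classic.
have box_compact p : compact (box p) by rewrite /box; case: p.2 => [i|]; exact: segment_compact.
apply: (subclosed_compact _ (tychonoff box_compact)).
  apply: closedI; [apply: closedI; [apply: closedI|]|].
  - apply: closed_bigI => k _.
    by apply: closed_le_continuous; [exact: cst_continuous | exact: continuous_amp].
  - apply: closed_bigI => k _.
    by apply: closed_le_continuous; [exact: continuous_amp | exact: cst_continuous].
  - apply: closed_bigI => p _; apply: closed_le_continuous; last exact: cst_continuous.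
    exact: continuous_mdist (continuous_pos p.1) p.2.
  - apply: closed_le_continuous; last exact: cst_continuous.
    apply: continuous_mul; first exact: cst_continuous.
    apply: continuous_sum => k; apply: continuous_mul; first exact: continuous_amp.
    exact: continuous_rho (continuous_pos k).
move=> z [[[amp_ge0 amp_le] pos_in] _] [k [i|]] /=; rewrite /box /= in_itv /=.
  rewrite -ler_distlC distrC (le_trans (normr_sub_le_dist3 (pos z k) (mic m0) i)) //.
  exact: (pos_in (k, m0)).
by rewrite amp_ge0 // amp_le.
Qed.

Lemma lift_admissible {a r} : (forall k, 0 <= a k) -> (forall k, inCC (r k)) ->
  norm2 R M N (Gam a r) <= 2 * X -> exists2 z, admissible z & Fx z = objT a r.
Proof.
move=> a_ge0 r_in Gam_le; have rho_pos k : 0 < rho mic (r k) := rho_gt0 mic (proj2 (r_in k)).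
exists (fun p => if p.2 is Some i then r p.1 i else a p.1 / rho mic (r p.1)).
  split; [split; [split|]|] => [k _|k _|p _|] /=.
  - by rewrite /amp /= divr_ge0 // ltW.
  - by rewrite /amp /= ler_pdivrMr // amp_le_rho.
  - exact: (proj1 (r_in p.1) p.2).
  - rewrite (eq_bigr a) => [|k _]; last by rewrite /amp /= divfK // gt_eqF.
    by rewrite (le_trans (amp_lb a r a_ge0 r_in)).
rewrite /Fobj /objT sqr_norm2; congr (_ * sqnorm2 _ _ _).
apply: funext => m; apply: funext => n; congr (_ - _); apply: eq_bigr => k _.
rewrite /amp /= ratom_gamma; last exact: (proj2 (r_in k)).
by rewrite mulrA divfK // gt_eqF.
Qed.

Lemma project_admissible {z} : admissible z ->
  exists a r, [/\ forall k, 0 <= a k, forall k, inCC (r k) & objT a r <= Fx z].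
Proof.
move=> [[[amp_ge0 amp_le] pos_in] sum_le].
pose on_mic k := rho mic (pos z k) == 0.
pose a k := if on_mic k then 0 else amp z k * rho mic (pos z k).
pose r k := if on_mic k then r0 else pos z k.
have off_mic k : ~~ on_mic k -> forall m, pos z k <> mic m.
  by move=> off m; apply: neq_mic_of_rho_gt0; rewrite lt_def off rho_ge0.
have amp_rho_ge0 k : 0 <= amp z k * rho mic (pos z k) by rewrite mulr_ge0 ?rho_ge0 ?amp_ge0.
have a_ge0 k : 0 <= a k by rewrite /a; case: ifP.
have r_in k : inCC (r k).
  by rewrite /r; case: ifPn => // off; split => m; [exact: (pos_in (k, m)) | exact: off_mic].
have sum_a_le : \sum_(k < K) a k <= 2 * X / C.
  rewrite ler_pdivlMr // mulrC (le_trans _ sum_le) //; apply: ler_wpM2l; first exact: ltW.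
  by apply: ler_sum => k _; rewrite /a; case: ifP.
exists a, r; split => //.
pose w k : 'I_M -> 'I_N -> R :=
  if on_mic k then fun m n => amp z k * ratom m n (pos z k) else fun _ _ => 0.
have residualE m n : x m n - \sum_(k < K) amp z k * ratom m n (pos z k) =
    (x m n - Gam a r m n) - \sum_(k < K) w k m n.
  rewrite -addrA -opprD -big_split; congr (_ - _); apply: eq_bigr => k _ /=.
  rewrite /a /r /w; case: ifPn => off; first by rewrite mul0r add0r.
  by rewrite addr0 ratom_gamma ?mulrA //; exact: off_mic.
rewrite /objT /Fobj sqr_norm2 ler_wpM2l ?invr_ge0 //.
under [leRHS]eq_bigr do under eq_bigr do rewrite residualE.
apply: sqnorm2_le_subr; rewrite dot2_sumr; apply: sumr_le0 => k _; rewrite /w.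
case: ifPn => [on|_]; first exact: dot2_residual_ratom_le0 (amp_ge0 k I) (eqP on).
by rewrite /dot2 big1 // => m _; rewrite big1 // => n _; rewrite mulr0.
Qed.

Lemma norm2_GammaK_le {a r} : objT a r <= 2^-1 * X ^+ 2 -> norm2 R M N (Gam a r) <= 2 * X.
Proof. by rewrite /objT ler_pM2l ?invr_gt0 // !sqr_norm2; exact: norm2_le_twice. Qed.

Lemma objT_has_minimizer : exists a r,
  (forall k, 0 <= a k) /\ (forall k, inCC (r k)) /\
  forall a' r', (forall k, 0 <= a' k) -> (forall k, inCC (r' k)) -> objT a r <= objT a' r'.
Proof.
have objT_null : objT (fun=> 0) (fun=> r0) = 2^-1 * X ^+ 2.
  congr (_ * norm2 _ _ _ _ ^+ 2); apply: funext => m; apply: funext => n.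
  by rewrite /GammaK big1 ?subr0 // => k _; rewrite mul0r.
have null_le : objT (fun=> 0) (fun=> r0) <= 2^-1 * X ^+ 2 by rewrite objT_null.
have [z0 z0_adm Fz0] :=
  lift_admissible (fun=> lexx (0 : R)) (fun=> r0_in) (norm2_GammaK_le null_le).
have [zs /set_mem zs_adm zs_min] := compact_EVT_min (ex_intro _ z0 z0_adm) compact_admissible
  (continuous_subspaceT (continuous_Fobj c fs mic kappa x kappa_cont)).
have [a [r [a_ge0 r_in objT_le]]] := project_admissible zs_adm.
exists a, r; do 2!split => //; move=> a' r' a'_ge0 r'_in; apply: le_trans objT_le _.
have [small|big] := leP (objT a' r') (2^-1 * X ^+ 2).
  have [z' z'_adm <-] := lift_admissible a'_ge0 r'_in (norm2_GammaK_le small).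
  exact/zs_min/mem_set.
by rewrite (le_trans (zs_min z0 (mem_set z0_adm))) // Fz0 objT_null ltW.
Qed.
End Existence.

Theorem theorem1 (R : realType) (c fs : R) (M N K : nat)
  (mic : 'I_M -> pt3 R) (kappa : R -> R) (x : 'I_M -> 'I_N -> R) (C : R) :
  0 < c -> 0 < fs -> (1 <= M)%N -> (1 <= N)%N -> (1 <= K)%N ->
  continuous kappa -> 0 < kappa 0 ->
  kappa t @[t --> +oo] --> 0 -> kappa t @[t --> -oo] --> 0 ->
  0 < C -> amplitude_lower_bounded R M N K c fs kappa mic C ->
  (exists r0 : pt3 R, inC R M N c fs mic r0) ->
  ((phi R N c fs kappa < 0 /\
      forall m : 'I_M, mu R M N fs kappa x m <= 2 / C * phi R N c fs kappa * norm2 R M N x)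
   \/ (0 <= phi R N c fs kappa /\ forall m : 'I_M, mu R M N fs kappa x m <= 0)) ->
  exists (a : 'I_K -> R) (r : 'I_K -> pt3 R),
    (forall k, 0 <= a k) /\ (forall k, inC R M N c fs mic (r k)) /\
    forall (a' : 'I_K -> R) (r' : 'I_K -> pt3 R),
      (forall k, 0 <= a' k) -> (forall k, inC R M N c fs mic (r' k)) ->
      objT R M N K c fs kappa mic x a r <= objT R M N K c fs kappa mic x a' r'.
Proof.
move=> c_gt0 fs_gt0 M_gt0 N_gt0 _ kappa_cont kappa0_gt0 _ kappa_ninfty C_gt0 amp_lb.
move=> [r0 r0_in] sign_condition.
have X2_ge0 : 0 <= 2 * norm2 R M N x by rewrite mulr_ge0 ?norm2_ge0.
have [B0 amp_le_rho] := exists_amp_le_rho c fs mic kappa C (2 * norm2 R M N x)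
  c_gt0 N_gt0 C_gt0 X2_ge0 kappa_cont kappa0_gt0 kappa_ninfty amp_lb.
by apply: (objT_has_minimizer c fs mic kappa x C B0 r0).
Qed.
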